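(* Fix a vertex $\mu$. Let $fE=\widehat f\widehat E\neq0$ and $G$ be antinef divisors. Then for every vertex $\nu$, $$\lambda(G,\widehat f_{\langle\widehat f\rangle}\widehat E;\nu)\ge\lambda(G,fE;\nu),$$ with equality if and only if either $d(\mu,\nu)\le1$, or $\widehat f_j=0$ for every $j\in\Gamma^i_\nu$, where $i$ is the vertex of the path $[\mu,\nu]$ adjacent to $\mu$.
   Context: Setting: $R$ two-dimensional regular local ring with algebraically closed residue field; $\pi:X=X_{N+1}\to\cdots\to X_1=\operatorname{Spec}R$ a composition of point blowups; $E_\nu$ strict and $E^*_\nu$ total transforms of exceptional divisors; proximity matrix $P$ ($p_{\mu,\mu}=1$, $p_{\mu,\nu}=-1$ if $x_\mu$ lies on the strict transform on $X_\mu$ of the exceptional divisor of the blowup of $x_\nu$, else $0$), $Q=(q_{\mu,\nu})=P^{-1}$, $V=(P^TP)^{-1}$. Basis $\widehat E_\nu$ with $E_\mu\cdot\widehat E_\nu=-\delta_{\mu,\nu}$; $\widehat f\widehat E=\sum\widehat f_\nu\widehat E_\nu=\sum f_\nu E_\nu=fE$ with $f=\widehat fV$; antinef means $\widehat f\ge0$. $K=\sum E^*_\nu=\sum k_\nu E_\nu$. Dual graph $\Gamma$ on $1..N$, $\gamma\sim\eta$ iff $\gamma\ne\eta$ and $E_\gamma\cap E_\eta\neq\emptyset$; $d(\mu,\nu)$ the graph distance; $[\mu,\nu]$ the path; branch $\Gamma^\mu_\nu$ = maximal connected subgraph containing $\nu$ but not $\mu$ ($\Gamma^\mu_\mu=\emptyset$).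 $\lambda(F,G;\nu)=(f_\nu+k_\nu+1)/g_\nu$. Modification: $\mathbf 1_i$ standard basis vector of $\mathbb Q^\Gamma$; $\rho_{[\alpha,\beta]}(\nu)=V_{\beta,\nu}/V_{\alpha,\nu}$; $\widehat r_{[\alpha,\beta]}=\mathbf 1_\beta-\rho_{[\alpha,\beta]}(\alpha)\mathbf 1_\alpha$; $\widehat f_{\langle\widehat g\rangle}=\widehat f-\sum_{i\sim\mu}\sum_{j\in\Gamma^\mu_i}\widehat g_j\widehat r_{[i,j]}$. *)

(* Combinatorial model of a composition of point blowups
   X = X_{N+1} -> ... -> X_1 = Spec R via its proximity relation.
   Vertices 1..N of the paper are the ordinals 'I_N (0-based). *)
From HB Require Import structures.
From mathcomp Require Import all_boot all_order all_algebra.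
Set Implicit Arguments. Unset Strict Implicit. Unset Printing Implicit Defensive.
Import Order.TTheory GRing.Theory Num.Theory.
Local Open Scope ring_scope.

Section Blowups.
Variable N : nat.
(* prox a b : the centre x_a lies on the strict transform on X_a of the
   exceptional divisor of the blowup of x_b ("a is proximate to b"). *)
Variable prox : rel 'I_N.

(* Exact combinatorial characterisation of the proximity relations arising
   from a sequence of point blowups over an algebraically closed residue field. *)
Definition proximity_structure : Prop :=
  [/\ (forall a b, prox a b -> (b < a)%N),
      (* every centre other than the first lies on the exceptional locus *)
      (forall a : 'I_N, (0 < a)%N -> exists b, prox a b),
      (* it lies on at most two exceptional components (normal crossings) *)
      (forall a, (#|[set b | prox a b]| <= 2)%N),
      (* if it lies on E_b and E_c (b < c), these meet, so x_c lies on E_b *)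
      (forall a b c, prox a b -> prox a c -> (b < c)%N -> prox c b) &
      (* two strict transforms meet in at most one point *)
      (forall a a' b c, a != a' -> prox a b -> prox a c -> prox a' b ->
          prox a' c -> b = c)].

Definition Pmx : 'M[rat]_N :=
  \matrix_(a, b) (if a == b then 1 else if prox a b then -1 else 0).
Definition Qmx : 'M[rat]_N := invmx Pmx.
Definition Vmx : 'M[rat]_N := invmx (Pmx^T *m Pmx).

(* divisors sum_nu f_nu E_nu are represented by the row of E-coefficients f;
   fhat is defined by f = fhat V *)
Definition fhat (f : 'rV[rat]_N) : 'rV[rat]_N := f *m (Pmx^T *m Pmx).

Definition is_divisor (f : 'rV[rat]_N) : Prop :=
  forall nu, exists z : int, f 0 nu = z%:~R.

Definition antinef (f : 'rV[rat]_N) : Prop := forall nu, 0 <= fhat f 0 nu.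

(* E-coefficients of E*_nu:  E*_nu = sum_mu q_{mu,nu} E_mu *)
Definition Estar (nu : 'I_N) : 'rV[rat]_N := \row_mu Qmx mu nu.
(* K = sum_nu E*_nu = sum_nu k_nu E_nu *)
Definition Kcoef : 'rV[rat]_N := \sum_nu Estar nu.

Definition lambda (f g : 'rV[rat]_N) (nu : 'I_N) : rat :=
  (f 0 nu + Kcoef 0 nu + 1) / g 0 nu.

Definition adj (c d : 'I_N) : bool :=
  (c != d) && (prox c d || prox d c) && ~~ [exists a, prox a c && prox a d].

(* branch c x = Gamma^c_x : vertices of the connected component of x in
   Gamma minus c  (empty if x = c) *)
Definition branch (c x : 'I_N) : pred 'I_N :=
  fun j => (x != c) && connect [rel a b | adj a b && (a != c) && (b != c)] x j.

Definition unitv (j : 'I_N) : 'rV[rat]_N := \row_k (k == j)%:R.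
Definition rho (al be nu : 'I_N) : rat := Vmx be nu / Vmx al nu.
Definition rhat (al be : 'I_N) : 'rV[rat]_N := unitv be - rho al be al *: unitv al.

(* hat f_<hat g> relative to the fixed vertex mu *)
Definition modhat (mu : 'I_N) (fh gh : 'rV[rat]_N) : 'rV[rat]_N :=
  fh - \sum_(i | adj i mu) \sum_(j | branch mu i j) gh 0 j *: rhat i j.

(* E-coefficients of the divisor hat f_<hat f> hat E *)
Definition modE (mu : 'I_N) (f : 'rV[rat]_N) : 'rV[rat]_N :=
  modhat mu (fhat f) (fhat f) *m Vmx.

End Blowups.

(* The modification subtracts, for every neighbour i of mu and every j in the
   branch Gamma^mu_i, the multiple fhat_j of r_[i,j] = Ehat_j - rho Ehat_i.
   The E-coefficient at v of r_[i,j] is the Green function at j of the dual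
   graph with i deleted, evaluated at v; so the coefficient of E_v drops by a
   nonnegative "defect", which vanishes exactly under the condition of the
   theorem and, when positive, stays below f_v. *)
From HB Require Import structures.
From mathcomp Require Import all_boot all_order all_algebra.
From mathcomp Require Import zify ring lra.
Set Implicit Arguments. Unset Strict Implicit. Unset Printing Implicit Defensive.
Import Order.TTheory GRing.Theory Num.Theory.

Lemma connect_induction (T : finType) (e : rel T) (P : T -> Prop) x :
  P x -> (forall y z, e y z -> P y -> P z) -> forall y, connect e x y -> P y.
Proof.
move=> Px IH y /connectP[p]; elim: p x Px => [|z p IHp] x Px /=; first by move=> _ ->.
by move=> /andP[exz pz] ey; apply: (IHp z (IH _ _ exz Px) pz ey).
Qed.

Lemma connect_mono (T : finType) (e e' : rel T) x y :
  subrel e e' -> connect e x y -> connect e' x y.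
Proof. by move=> H; apply: connect_sub => a b /H; apply: connect1. Qed.

Local Open Scope ring_scope.

Lemma sum_delta n (F : 'I_n -> rat) x : \sum_c (c == x)%:R * F c = F x.
Proof.
rewrite (bigD1 x) //= eqxx mul1r big1 ?addr0 // => c /negbTE ->; by rewrite mul0r.
Qed.

Definition negpart n (u : 'rV[rat]_n) : 'rV[rat]_n := \row_x Num.min (u 0 x) 0.

Section Resolution.
Variable N : nat.
Variable prox : rel 'I_N.
Hypothesis Hps : proximity_structure prox.

Lemma prox_lt a b : prox a b -> (b < a)%N.
Proof. by case: Hps => H _ _ _ _; apply: H. Qed.

Lemma prox_irr a : prox a a = false.
Proof. by apply/negP => /prox_lt; rewrite ltnn. Qed.

Lemma adj_sym : symmetric (adj prox).
Proof.
move=> x y; rewrite /adj eq_sym (orbC (prox x y)); congr (_ && ~~ _).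
by apply: eq_existsb => a; rewrite andbC.
Qed.

Lemma adj_neq x y : adj prox x y -> x != y.
Proof. by case/andP => /andP[]. Qed.

Lemma prox_two a u w z : prox a u -> prox a w -> u != w -> prox a z -> z = u \/ z = w.
Proof.
move=> hu hw nuw hz; case: (eqVneq z u) => [|nzu]; first by left.
case: (eqVneq z w) => [|nzw]; first by right.
case: Hps => _ _ H3 _ _; have: (#|z |: [set u; w]| <= #|[set y | prox a y]|)%N.
  apply: subset_leq_card; apply/subsetP => y; rewrite !inE.
  by case/or3P => /eqP ->; rewrite ?hu ?hw ?hz.
rewrite cardsU1 cards2 nuw !inE negb_or nzu nzw /= => h.
by have := leq_trans h (H3 a).
Qed.

(* The dual graph of the exceptional divisor of the first k blowups: vertices
   below k, with the exceptional intersections only counted among them. *)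
Definition partial_adj (k : nat) (x y : 'I_N) : bool :=
  [&& (x < k)%N, (y < k)%N, x != y, prox x y || prox y x &
      ~~ [exists a : 'I_N, [&& (a < k)%N, prox a x & prox a y]]].

Lemma adj_partial_adj x y : adj prox x y = partial_adj N x y.
Proof.
rewrite /adj /partial_adj !ltn_ord /= -andbA; congr [&& _, _ & ~~ _].
by apply: eq_existsb => a; rewrite ltn_ord.
Qed.

(* A rooted-forest structure on the graph of the first k blowups: a parent map
   pi (roots are fixed, only vertices below k move) decreasing a rank r, such
   that every edge joins a vertex to its parent. *)
Definition forest_witness (k : nat) (pi : 'I_N -> 'I_N) (r : 'I_N -> nat) : Prop :=
  [/\ forall z : 'I_N, (k <= z)%N -> pi z = z,
      forall z, pi z = z \/ (pi z < k)%N,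
      forall z, pi z != z -> (r (pi z) < r z)%N &
      forall x y, partial_adj k x y -> pi x = y \/ pi y = x].

Section Blowup.
Variables (k : nat) (kk : 'I_N).
Hypothesis Hkk : nat_of_ord kk = k.

Lemma below_neq (z : 'I_N) : (z < k)%N -> z != kk.
Proof. by apply: contraTneq => ->; rewrite Hkk ltnn. Qed.

Lemma partial_adj_succ x y : partial_adj k.+1 x y ->
  (x = kk /\ prox kk y) \/ (y = kk /\ prox kk x) \/
  (partial_adj k x y /\ ~~ (prox kk x && prox kk y)).
Proof.
move=> /and5P[hx hy hxy hp hex].
have [ex|nex] := eqVneq x kk.
  left; split=> //; case/orP: hp; rewrite ex // => /prox_lt h; exfalso; lia.
have [ey|ney] := eqVneq y kk.
  right; left; split=> //; case/orP: hp; rewrite ey // => /prox_lt h; exfalso; lia.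
have hx' : (x < k)%N.
  rewrite ltn_neqAle -ltnS hx andbT; apply: contra nex => /eqP e.
  by apply/eqP/val_inj; rewrite /= Hkk.
have hy' : (y < k)%N.
  rewrite ltn_neqAle -ltnS hy andbT; apply: contra ney => /eqP e.
  by apply/eqP/val_inj; rewrite /= Hkk.
right; right; split.
  rewrite /partial_adj hx' hy' hxy hp /=; apply: contra hex => /existsP[a /and3P[ha h1 h2]].
  by apply/existsP; exists a; rewrite h1 h2 andbT; lia.
apply: contra hex => /andP[h1 h2]; apply/existsP; exists kk; by rewrite h1 h2 Hkk ltnSn.
Qed.

Lemma partial_adj_two_prox u w : prox kk u -> prox kk w -> u != w -> partial_adj k u w.
Proof.
move=> hu hw nuw; have ulk : (u < k)%N by rewrite -Hkk; apply: prox_lt.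
have wlk : (w < k)%N by rewrite -Hkk; apply: prox_lt.
case: Hps => _ _ _ H4 H5.
rewrite /partial_adj ulk wlk nuw /=; apply/andP; split.
  case: (ltngtP u w) => [h|h|/val_inj e]; last by rewrite e eqxx in nuw.
  - by rewrite (H4 _ _ _ hu hw h) orbT.
  - by rewrite (H4 _ _ _ hw hu h).
apply/existsP => [[a /and3P[ha h1 h2]]].
by move: nuw; rewrite (H5 _ _ _ _ (below_neq ha) h1 h2 hu hw) eqxx.
Qed.

Section WitnessStep.
(* The blowup of kk turns a forest into a forest: it adds an isolated vertex,
   a leaf, or subdivides the edge between the two vertices kk is proximate to. *)
Variables (pi : 'I_N -> 'I_N) (r : 'I_N -> nat).
Hypothesis Hwit : forest_witness k pi r.

Lemma parent_neq z : z != kk -> pi z != kk.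
Proof.
case: Hwit => _ Ib _ _ nz; case: (Ib z) => [->//|]; exact: below_neq.
Qed.

Lemma witness_isolated : (forall z, prox kk z = false) -> forest_witness k.+1 pi r.
Proof.
case: Hwit => Ia Ib Ic Id nop; split.
- by move=> z hz; apply: Ia; apply: ltnW.
- by move=> z; case: (Ib z) => [->|h]; [left|right; apply: (ltn_trans h)].
- exact: Ic.
move=> x y /partial_adj_succ [[_ h]|[[_ h]|[h _]]]; last exact: Id.
  by rewrite nop in h.
by rewrite nop in h.
Qed.

Lemma witness_leaf u : prox kk u -> (forall z, prox kk z -> z = u) ->
  exists pi' r', forest_witness k.+1 pi' r'.
Proof.
case: Hwit => Ia Ib Ic Id hu onlyu.
have ulk : (u < k)%N by rewrite -Hkk; apply: prox_lt.
pose pi' (z : 'I_N) := if z == kk then u else pi z.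
pose r' (z : 'I_N) := if z == kk then (r u).+1 else r z.
exists pi', r'; split.
- move=> z hz; have nz : z != kk by apply: contraTneq hz => ->; rewrite Hkk ltnn.
  by rewrite /pi' (negbTE nz); apply: Ia; apply: ltnW.
- move=> z; rewrite /pi'; case: eqP => _; first by right; apply: (ltn_trans ulk).
  by case: (Ib z) => [->|h]; [left|right; apply: (ltn_trans h)].
- move=> z; rewrite /pi' /r'; case: (eqVneq z kk) => [->|nz].
    by rewrite (negbTE (below_neq ulk)).
  by rewrite (negbTE (parent_neq nz)); apply: Ic.
move=> x y /partial_adj_succ [[-> h]|[[-> h]|[h _]]].
- by left; rewrite /pi' eqxx (onlyu _ h).
- by right; rewrite /pi' eqxx (onlyu _ h).
move: h => /[dup] /and5P[hx hy _ _ _] h.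
by rewrite /pi' (negbTE (below_neq hx)) (negbTE (below_neq hy)); apply: Id.
Qed.

Lemma witness_subdivide a b : prox kk a -> prox kk b -> a != b ->
  (forall z, prox kk z -> z = a \/ z = b) -> pi b = a ->
  exists pi' r', forest_witness k.+1 pi' r'.
Proof.
case: Hwit => Ia Ib Ic Id ha hb nab onl piba.
have alk : (a < k)%N by rewrite -Hkk; apply: prox_lt.
have blk : (b < k)%N by rewrite -Hkk; apply: prox_lt.
pose pi' (z : 'I_N) := if z == kk then a else if z == b then kk else pi z.
pose r' (z : 'I_N) := if z == kk then (2 * r a).+1 else (2 * r z)%N.
have akk := below_neq alk; have bkk := below_neq blk.
exists pi', r'; split.
- move=> z hz; have nz : z != kk by apply: contraTneq hz => ->; rewrite Hkk ltnn.
  have nzb : z != b by apply: contraTneq hz => ->; lia.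
  by rewrite /pi' (negbTE nz) (negbTE nzb); apply: Ia; apply: ltnW.
- move=> z; rewrite /pi'; case: eqP => _; first by right; apply: (ltn_trans alk).
  case: eqP => _; first by right; rewrite Hkk.
  by case: (Ib z) => [->|h]; [left|right; apply: (ltn_trans h)].
- move=> z; rewrite /pi' /r'; case: (eqVneq z kk) => [->|nz].
    by rewrite (negbTE akk); lia.
  case: (eqVneq z b) => [->|nzb].
    have : (r a < r b)%N by rewrite -piba; apply: Ic; rewrite piba.
    by rewrite eqxx; lia.
  by rewrite (negbTE (parent_neq nz)) => h; have := Ic _ h; lia.
move=> x y /partial_adj_succ [[-> h]|[[-> h]|[h nb]]].
- case: (onl _ h) => ->; first by left; rewrite /pi' eqxx.
  by right; rewrite /pi' eqxx (negbTE bkk).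
- case: (onl _ h) => ->; first by right; rewrite /pi' eqxx.
  by left; rewrite /pi' eqxx (negbTE bkk).
move: h => /[dup] /and5P[hx hy _ _ _] h.
rewrite /pi' (negbTE (below_neq hx)) (negbTE (below_neq hy)).
case: (Id _ _ h) => e.
- left; case: eqP => ex //; move: nb; by rewrite ex -e ex piba ha hb.
- right; case: eqP => ey //; move: nb; by rewrite ey -e ey piba ha hb.
Qed.

(* Of the two vertices kk is proximate to, the one whose parent is the other
   is subdivided from it. *)
Lemma witness_succ : exists pi' r', forest_witness k.+1 pi' r'.
Proof.
case: (pickP (prox kk)) => [u hu|nop]; last by exists pi, r; apply: witness_isolated.
case: (pickP [pred w | prox kk w && (w != u)]) => [w /andP[hw nwu] | nop]; last first.
  apply: (witness_leaf hu) => z hz; apply/eqP.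
  by apply: contraFT (nop z) => nz; rewrite /= hz nz.
have onl z : prox kk z -> z = u \/ z = w by apply: prox_two; rewrite // eq_sym.
case: Hwit => _ _ _ Id.
have nuw : u != w by rewrite eq_sym.
case: (Id _ _ (partial_adj_two_prox hu hw nuw)) => h.
- by apply: (witness_subdivide hw hu) => // z /onl []; auto.
- by apply: (witness_subdivide hu hw); rewrite // eq_sym.
Qed.

End WitnessStep.
End Blowup.

(* Hence every partial dual graph, in particular the dual graph, is a forest. *)
Lemma witness_exists k : (k <= N)%N -> exists pi r, forest_witness k pi r.
Proof.
elim: k => [_|k IH hk].
  exists id, (fun _ => 0%N); split; [by [] | by left | by move=> z; rewrite eqxx |].
  by move=> x y /and5P[].
have [pi [r Hi]] := IH (ltnW hk).
exact: (@witness_succ k (Ordinal hk) erefl pi r Hi).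
Qed.

Definition adj_without (x y : 'I_N) : rel 'I_N :=
  [rel a b | adj prox a b && ~~ (((a == x) && (b == y)) || ((a == y) && (b == x)))].

Lemma adj_without_sym x y : symmetric (adj_without x y).
Proof.
move=> a b; rewrite /adj_without /= adj_sym (orbC ((b == x) && _)).
by rewrite (andbC (a == x)) (andbC (a == y)).
Qed.

Lemma adj_without_swap x y a b : adj_without x y a b = adj_without y x a b.
Proof. by rewrite /adj_without /= orbC. Qed.

(* Along a
   path avoiding the edge {u, v} with pi v = u, every step follows or reverses
   the parent map, so v is an ancestor of u, contradicting r u < r v. *)
Lemma adj_bridge x y : adj prox x y -> ~~ connect (adj_without x y) x y.
Proof.
have [pi [r [_ _ Ic Id]]] := witness_exists (leqnn N).
have Id' a b : adj prox a b -> pi a = b \/ pi b = a by rewrite adj_partial_adj; apply: Id.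
have rank n z : (r (iter n pi z) <= r z)%N.
  elim: n => [//|n IH]; rewrite iterS.
  case: (eqVneq (pi (iter n pi z)) (iter n pi z)) => [->//|h].
  by apply: leq_trans (ltnW (Ic _ h)) IH.
suff claim u v : adj prox u v -> pi v = u -> ~~ connect (adj_without u v) v u.
  move=> hxy; case: (Id' x y hxy) => h.
  - have := claim y x; rewrite adj_sym => /(_ hxy h).
    by apply: contra => /connect_mono; apply => a b; rewrite adj_without_swap.
  - have := claim x y hxy h; apply: contra => c.
    by rewrite (sym_connect_sym (@adj_without_sym x y)).
move=> huv pvu; apply/negP => c.
have [n hn] : exists n, iter n pi u = v.
  move: c; apply: (@connect_induction _ _ (fun z => exists n, iter n pi z = v)).
    by exists 0%N.
  move=> a b /= /andP[hab hn] [n hn']; case: (Id' a b hab).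
  - move=> pab; case: n hn' => [/= av|m hm].
      by move: hn; rewrite -pab av pvu !eqxx orbT.
    by exists m; rewrite -pab -iterSr.
  - by move=> pba; exists n.+1; rewrite iterSr pba.
have := rank n u; rewrite hn -pvu.
have := Ic v; rewrite pvu (adj_neq huv) => /(_ isT).
lia.
Qed.

Definition avoid (c : 'I_N) : rel 'I_N := [rel a b | adj prox a b && (a != c) && (b != c)].

Lemma avoid_sym c : symmetric (avoid c).
Proof. by move=> a b; rewrite /avoid /= adj_sym -andbA (andbC (a != c)) andbA. Qed.

Lemma avoid_connect_sym c x y : connect (avoid c) x y = connect (avoid c) y x.
Proof. exact: (sym_connect_sym (@avoid_sym c)). Qed.

Lemma branch_neq c x y : branch prox c x y -> y != c.
Proof.
case/andP=> xc; apply: (@connect_induction _ _ (fun z => z != c)) => // a b.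
by case/andP.
Qed.

(* No vertex can be reached both from i avoiding its neighbour m and from m
   avoiding i: the two paths would join i to m without the edge {i, m}. *)
Lemma no_detour i m x : adj prox i m -> connect (avoid m) i x -> connect (avoid i) m x -> False.
Proof.
move=> him h1 h2; apply: (negP (adj_bridge him)).
have sub a b : avoid m a b || avoid i a b -> adj_without i m a b.
  by case/orP=> /andP[/andP[hab ha] hb];
    rewrite /adj_without /= hab (negbTE hb) (negbTE ha) !andbF.
have c1 : connect (adj_without i m) i x.
  by apply: connect_mono h1 => a b hab; apply: sub; rewrite hab.
have c2 : connect (adj_without i m) x m.
  by rewrite avoid_connect_sym in h2; apply: connect_mono h2 => a b hab; apply: sub; rewrite hab orbT.
exact: connect_trans c1 c2.
Qed.

Lemma avoid_path_split i m j v : connect (avoid i) j v ->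
  connect (avoid m) j v \/ connect (avoid i) j m.
Proof.
move=> h; suff: (connect (avoid m) j v /\ connect (avoid i) j v) \/ connect (avoid i) j m.
  by case=> [[]|]; auto.
move: h; apply: (@connect_induction _ _ (fun z => (connect (avoid m) j z /\
  connect (avoid i) j z) \/ connect (avoid i) j m)); first by left; rewrite !connect0.
move=> y z hyz [[h1 h2]|h]; last by right.
have h2' := connect_trans h2 (connect1 hyz).
case: (eqVneq z m) => [ezm|nzm]; first by right; rewrite -ezm.
case: (eqVneq y m) => [eym|nym]; first by right; rewrite -eym.
left; split=> //; apply: connect_trans h1 (connect1 _).
by move: hyz => /andP[/andP[h _] _]; rewrite /avoid /= h nzm nym.
Qed.

Lemma branch_far i m j v : adj prox i m -> branch prox m i j -> branch prox i v j ->
  [/\ branch prox m i v, v != m & ~~ adj prox m v].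
Proof.
move=> him /andP[im hij] /andP[vi hvj].
have vm : v != m by apply/eqP => evm; apply: (no_detour him hij); rewrite -evm.
split => //.
- rewrite /branch im /=; rewrite avoid_connect_sym in hvj.
  case: (avoid_path_split m hvj) => h; first exact: connect_trans hij h.
  by exfalso; apply: (no_detour him hij); rewrite avoid_connect_sym.
- apply/negP => hmv; apply: (no_detour him hij).
  apply: connect_trans (connect1 _) hvj; rewrite /avoid /= hmv vi andbT.
  by rewrite eq_sym (adj_neq him).
Qed.

Lemma branch_nested i m v j : adj prox i m -> branch prox m i v -> branch prox i v j ->
  branch prox m i j.
Proof.
move=> him /andP[im hiv] /andP[vi hvj]; rewrite /branch im /=.
case: (avoid_path_split m hvj) => h; first exact: connect_trans hiv h.
by exfalso; apply: (no_detour him hiv); rewrite avoid_connect_sym.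
Qed.

Lemma branch_disjoint i i' m x : adj prox i m -> adj prox i' m -> branch prox m i x ->
  branch prox m i' x -> i = i'.
Proof.
move=> him him' /andP[_ h1] /andP[_ h2]; apply/eqP/negP => /negP nii'.
apply: (no_detour him' (x := i)); first by apply: connect_trans h2 _; rewrite avoid_connect_sym.
apply: connect1; rewrite /avoid /= adj_sym him /= eq_sym nii' andbT.
exact: (adj_neq him').
Qed.

(* The proximity matrix P, the intersection matrix A = (-E_x . E_y) = P^T P
   of the exceptional curves, and its inverse V. *)
Local Notation P := (Pmx prox).
Local Notation A := ((Pmx prox)^T *m Pmx prox).
Local Notation V := (Vmx prox).

Lemma Pmx_entry c x : P c x = (c == x)%:R - (prox c x)%:R.
Proof.
rewrite /Pmx mxE; case: eqP => [->|_]; first by rewrite prox_irr subr0.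
by case: (prox c x); rewrite ?sub0r.
Qed.

(* P is unitriangular, since proximities point to earlier centres. *)
Lemma Pmx_unit : P \in unitmx.
Proof.
rewrite unitmxE (det_trig (A := P)); last first.
  apply/is_trig_mxP => i j hij; rewrite Pmx_entry.
  have -> : (i == j) = false by apply/negbTE; apply: contraTneq hij => ->; rewrite ltnn.
  have -> : prox i j = false by apply/negP => /(prox_lt); lia.
  by rewrite subrr.
rewrite big1 ?unitr1 // => i _; by rewrite Pmx_entry eqxx prox_irr // subr0.
Qed.

Lemma Amx_unit : A \in unitmx.
Proof. by rewrite unitmx_mul unitmx_tr Pmx_unit. Qed.

Lemma Vmx_mulA : V *m A = 1%:M.
Proof. exact: (mulVmx Amx_unit). Qed.

Lemma Amx_mulV : A *m V = 1%:M.
Proof. exact: (mulmxV Amx_unit). Qed.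

Lemma count_common x y : x != y ->
  \sum_c ((prox c x)%:R * (prox c y)%:R : rat) = [exists a, prox a x && prox a y]%:R.
Proof.
move=> nxy; case: existsP => [[a /andP[hax hay]]|hn].
  rewrite (bigD1 a) //= hax hay mulr1 big1 ?addr0 // => c nca.
  case hcx: (prox c x); case hcy: (prox c y); rewrite ?mulr0 ?mul0r //.
  case: Hps => _ _ _ _ H5; by move: nxy; rewrite (H5 _ _ _ _ nca hcx hcy hax hay) eqxx.
rewrite big1 // => c _; case hcx: (prox c x); case hcy: (prox c y); rewrite ?mulr0 ?mul0r //.
by exfalso; apply: hn; exists c; rewrite hcx hcy.
Qed.

Lemma Amx_offdiag x y : x != y -> A x y = if adj prox x y then -1 else 0.
Proof.
move=> nxy; have -> : A x y = (x == y)%:R - (prox x y)%:R - (prox y x)%:R +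
    \sum_c ((prox c x)%:R * (prox c y)%:R : rat).
  rewrite mxE (eq_bigr (fun c => (c == x)%:R * P c y - (prox c x)%:R * (c == y)%:R +
                 (prox c x)%:R * (prox c y)%:R)); last first.
    by move=> c _; rewrite [P^T _ _]mxE !Pmx_entry; ring.
  rewrite !big_split /= sum_delta sumrN.
  rewrite (eq_bigr (fun c => (c == y)%:R * (prox c x)%:R : rat)); last by move=> c _; rewrite mulrC.
  by rewrite sum_delta Pmx_entry; ring.
rewrite count_common // (negbTE nxy) /adj nxy /=.
case: existsP => [[a /andP[hax hay]]|hn] /=; last first.
  rewrite andbT; case hxy: (prox x y); case hyx: (prox y x) => /=; try ring.
  by have := prox_lt hxy; have := prox_lt hyx; lia.
case: Hps => H1 _ _ H4 _.
case: (ltngtP x y) => [h|h|/val_inj e]; last by rewrite e eqxx in nxy.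
- have -> : prox x y = false by apply/negP => /H1; lia.
  by rewrite (H4 _ _ _ hax hay h) andbF /=; ring.
- have -> : prox y x = false by apply/negP => /H1; lia.
  by rewrite (H4 _ _ _ hay hax h) andbF /=; ring.
Qed.

Lemma Amx_offdiag_le0 x y : x != y -> A x y <= 0.
Proof. by move=> h; rewrite Amx_offdiag //; case: adj; rewrite ?lerN10. Qed.

Definition qform (u : 'rV[rat]_N) : rat := \sum_x (u *m A) 0 x * u 0 x.

(* qform u = |u P^T|^2 and P is invertible, so A is positive definite. *)
Lemma qform_pos u : u != 0 -> 0 < qform u.
Proof.
move=> nu; set w := u *m P^T.
have -> : qform u = \sum_k w 0 k ^+ 2.
  have -> : qform u = (w *m w^T) 0 0.
    have -> : w *m w^T = u *m A *m u^T by rewrite /w trmx_mul trmxK !mulmxA.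
    by rewrite [RHS]mxE; apply: eq_bigr => x _; rewrite [u^T _ _]mxE.
  rewrite mxE; apply: eq_bigr => k _; by rewrite [w^T _ _]mxE expr2.
have [k hk] : exists k, w 0 k != 0.
  case: (pickP (fun k => w 0 k != 0)) => [k hk|h]; first by exists k.
  have : u = w *m invmx P^T by rewrite /w -mulmxA mulmxV ?mulmx1 // unitmx_tr Pmx_unit.
  suff -> : w = 0 by rewrite mul0mx => u0; rewrite u0 eqxx in nu.
  by apply/rowP => j; move: (h j) => /= /negbFE /eqP ->; rewrite mxE.
rewrite lt0r sumr_ge0 ?andbT => [|i _]; last exact: sqr_ge0.
rewrite psumr_neq0 ?has_predT; last by move=> i _; exact: sqr_ge0.
apply/hasP; exists k; first by rewrite mem_index_enum.
by rewrite /= lt0r sqr_ge0 sqrf_eq0 hk.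
Qed.

Lemma qform_le0 u : qform u <= 0 -> u = 0.
Proof. by move=> h; apply/eqP; apply: contraTT h => nu; rewrite -ltNge qform_pos. Qed.

(* Since A has nonpositive off-diagonal entries, the negative part m of any h
   satisfies qform m <= (h A) . m. *)
Lemma qform_negpart_le h : qform (negpart h) <= \sum_x (h *m A) 0 x * negpart h 0 x.
Proof.
set m := negpart h; pose p := \row_x Num.max (h 0 x) 0.
have hpm : h = p + m by apply/rowP => x; rewrite !mxE addr_max_min addr0.
have -> : \sum_x (h *m A) 0 x * m 0 x = \sum_x (p *m A) 0 x * m 0 x + qform m.
  rewrite /qform -big_split; apply: eq_bigr => x _ /=.
  by rewrite {1}hpm mulmxDl mxE mulrDl.
rewrite lerDr; apply: sumr_ge0 => x _; rewrite mxE mulr_suml; apply: sumr_ge0 => y _.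
case: (eqVneq y x) => [->|nyx].
  have pm0 : p 0 x * m 0 x = 0.
    by rewrite !mxE maxEle minEle; case: lerP => _; rewrite ?mulr0 ?mul0r.
  by rewrite mulrAC pm0 mul0r.
rewrite -mulrA; apply: mulr_ge0; first by rewrite mxE le_max lexx orbT.
by apply: mulr_le0; [exact: Amx_offdiag_le0 | rewrite mxE ge_min lexx orbT].
Qed.

Section Green.
(* Discrete maximum principle for A: let h vanish on a set s of vertices, and
   let h A agree outside s with the indicator of a vertex j outside s.  Then h
   is positive on the component of j in the dual graph restricted to the
   complement of s (the relation e), and vanishes elsewhere. *)
Variables (s : pred 'I_N) (e : rel 'I_N) (h : 'rV[rat]_N) (j : 'I_N).
Hypothesis He : forall a b, e a b = [&& adj prox a b, ~~ s a & ~~ s b].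
Hypothesis Hj : ~~ s j.
Hypothesis Hh0 : forall x, s x -> h 0 x = 0.
Hypothesis HhA : forall x, ~~ s x -> (h *m A) 0 x = (x == j)%:R.

(* The negative part m of h has qform m <= (h A) . m = m_j <= 0. *)
Lemma green_ge0 x : 0 <= h 0 x.
Proof.
set m := negpart h.
have key : \sum_y (h *m A) 0 y * m 0 y = m 0 j.
  rewrite -(sum_delta (fun y => m 0 y)); apply: eq_bigr => y _.
  case sy: (s y); last by rewrite HhA ?sy.
  by rewrite [m 0 y]mxE (Hh0 sy) minxx !mulr0.
have m0 : m = 0.
  apply: qform_le0; apply: le_trans (qform_negpart_le h) _.
  by rewrite key mxE ge_min lexx orbT.
have := congr1 (fun M : 'rV[rat]_N => M 0 x) m0; rewrite !mxE => ex.
rewrite leNgt; apply/negP => hlt; move: ex; rewrite minEle (ltW hlt) => ex.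
by rewrite ex ltxx in hlt.
Qed.

Lemma green_component_avoids y : connect e j y -> ~~ s y.
Proof. by apply: (@connect_induction _ _ (fun z => ~~ s z) _ Hj) => a b; rewrite He => /and3P[]. Qed.

(* The restriction k of h to the complement of the component of j satisfies
   (k A)_x = 0 wherever k_x may be nonzero, hence qform k = 0 and k = 0. *)
Lemma green_vanish v : ~~ connect e j v -> h 0 v = 0.
Proof.
move=> cv; pose k := \row_x (if connect e j x then 0 else h 0 x).
have kA x : ~~ connect e j x -> ~~ s x -> (k *m A) 0 x = 0.
  move=> cx sx; have xj : x != j by apply: contraNneq cx => ->; exact: connect0.
  suff -> : (k *m A) 0 x = (h *m A) 0 x by rewrite HhA // (negbTE xj).
  rewrite !mxE; apply: eq_bigr => y _; rewrite mxE; case: ifP => cy //.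
  have nyx : y != x by apply: contraNneq cx => <-.
  rewrite Amx_offdiag //; case: ifP => hyx; last by rewrite !mulr0.
  have sy := green_component_avoids cy.
  by case/negP: cx; apply: connect_trans cy (connect1 _); rewrite He hyx sy sx.
have k0 : k = 0.
  apply: qform_le0; rewrite le_eqVlt; apply/orP; left; apply/eqP.
  apply: big1 => x _.
  case: (boolP (connect e j x)) => cx; first by rewrite [k 0 x]mxE cx mulr0.
  case: (boolP (s x)) => sx; first by rewrite [k 0 x]mxE (negbTE cx) Hh0 // mulr0.
  by rewrite kA // mul0r.
by have := congr1 (fun M : 'rV[rat]_N => M 0 v) k0; rewrite !mxE (negbTE cv).
Qed.

(* h_j > 0 since (h A)_j = 1, and positivity propagates along edges since
   (h A)_z = 0 forces h_z > 0 when a neighbour y of z has h_y > 0. *)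
Lemma green_pos v : connect e j v -> 0 < h 0 v.
Proof.
have hA x : (h *m A) 0 x = \sum_y h 0 y * A y x by rewrite mxE.
have hj : 0 < h 0 j.
  rewrite lt_neqAle green_ge0 andbT eq_sym; apply/negP => /eqP hj0.
  have : (h *m A) 0 j <= 0.
    rewrite hA; apply: sumr_le0 => y _; case: (eqVneq y j) => [->|nyj].
      by rewrite hj0 mul0r.
    by apply: mulr_ge0_le0; [exact: green_ge0 | exact: Amx_offdiag_le0].
  by rewrite HhA // eqxx ler10.
apply: (@connect_induction _ _ (fun z => 0 < h 0 z) _ hj) => y z; rewrite He => /and3P[ayz sy sz] hy.
rewrite lt_neqAle green_ge0 andbT eq_sym; apply/negP => /eqP hz0.
have zj : z != j by apply: contraTneq hj => ezj; rewrite -ezj hz0 ltxx.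
have : (h *m A) 0 z = 0 by rewrite HhA // (negbTE zj).
rewrite hA (bigD1 y) //= Amx_offdiag ?(adj_neq ayz) // ayz => e0.
have : \sum_(w | w != y) h 0 w * A w z <= 0.
  apply: sumr_le0 => w _; case: (eqVneq w z) => [->|nwz]; first by rewrite hz0 mul0r.
  by apply: mulr_ge0_le0; [exact: green_ge0 | exact: Amx_offdiag_le0].
move: e0 hy; lra.
Qed.

End Green.

Lemma Vmx_sym x y : V x y = V y x.
Proof.
have AT : A^T = A by rewrite trmx_mul trmxK.
have VT : V^T = V by rewrite /Vmx trmx_inv AT.
by rewrite -{1}VT mxE.
Qed.

(* The rows of V are the Green functions of the whole dual graph: V x v > 0
   exactly when x and v lie in the same component. *)
Lemma Vmx_green x v : (connect (adj prox) x v -> 0 < V x v) /\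
                      (~~ connect (adj prox) x v -> V x v = 0).
Proof.
have He a b : adj prox a b = [&& adj prox a b, ~~ xpred0 a & ~~ xpred0 b] by rewrite andbT.
have HhA y : ~~ xpred0 y -> (row x V *m A) 0 y = (y == x)%:R.
  by move=> _; rewrite -row_mul Vmx_mulA !mxE eq_sym.
have Hh0 y : xpred0 y -> row x V 0 y = 0 by [].
have := green_pos He isT Hh0 HhA (v := v); have := green_vanish He isT Hh0 HhA (v := v).
by rewrite !mxE; split.
Qed.

Lemma Vmx_ge0 x v : 0 <= V x v.
Proof.
have [h1 h2] := Vmx_green x v; case: (boolP (connect (adj prox) x v)) => c.
  exact/ltW/h1.
by rewrite h2.
Qed.

Lemma Vmx_branch_gt0 c x y : branch prox c x y -> 0 < V x y.
Proof.
case/andP=> _ cxy; apply: (Vmx_green x y).1.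
by apply: connect_mono cxy => a b /andP[/andP[]].
Qed.

Lemma Vmx_diag_gt0 i : 0 < V i i.
Proof. exact: (Vmx_green i i).1 (connect0 _ _). Qed.

(* Antinef divisors are effective: f = fhat V with fhat >= 0 and V >= 0. *)
Lemma fhatK f : fhat prox f *m V = f.
Proof. by rewrite /fhat -mulmxA Amx_mulV mulmx1. Qed.

Lemma antinef_ge0 f v : antinef prox f -> 0 <= f 0 v.
Proof.
move=> Hf; rewrite -(fhatK f) mxE; apply: sumr_ge0 => x _.
by apply: mulr_ge0; [exact: Hf | exact: Vmx_ge0].
Qed.

(* Q = P^-1 >= 0: the relation Q P = 1 expresses each column of Q through the
   columns of the later centres, so induction from the last centre applies. *)
Lemma Qmx_ge0 v x : 0 <= Qmx prox v x.
Proof.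
have QP : Qmx prox *m P = 1%:M by apply: mulVmx; apply: Pmx_unit.
have rec y : Qmx prox v y = (v == y)%:R + \sum_z (prox z y)%:R * Qmx prox v z.
  have := congr1 (fun M : 'M[rat]_N => M v y) QP; rewrite !mxE => <-.
  rewrite (eq_bigr (fun z => (z == y)%:R * Qmx prox v z - (prox z y)%:R * Qmx prox v z)).
    by rewrite sumrB sum_delta subrK.
  by move=> z _; rewrite Pmx_entry; ring.
suff H n : forall y : 'I_N, (N - y <= n)%N -> 0 <= Qmx prox v y by apply: (H (N - x)%N).
elim: n => [|n IH] y hy; first by have := ltn_ord y; lia.
rewrite rec; apply: addr_ge0; first by case: (v == y).
apply: sumr_ge0 => z _; case hz: (prox z y); last by rewrite mul0r.
by rewrite mul1r; apply: IH; have := prox_lt hz; have := ltn_ord z; lia.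
Qed.

Lemma Kcoef_ge0 v : 0 <= Kcoef prox 0 v.
Proof. by rewrite /Kcoef summxE; apply: sumr_ge0 => x _; rewrite mxE; apply: Qmx_ge0. Qed.

Definition rcoef (i j v : 'I_N) : rat := V j v - rho prox i j i * V i v.

Lemma rhat_coef i j v : (rhat prox i j *m V) 0 v = rcoef i j v.
Proof.
have unitvV k : (unitv k *m V) 0 v = V k v.
  by rewrite mxE -(sum_delta (fun c => V c v) k); apply: eq_bigr => c _; rewrite mxE.
rewrite /rhat /rcoef mulmxBl -scalemxAl -(unitvV j) -(unitvV i).
by move: (unitv j *m V) (unitv i *m V) => a b; rewrite !mxE.
Qed.

(* rcoef i j is the Green function at j of the dual graph with i deleted:
   it is positive at v when j lies in the branch at i of v, and 0 otherwise. *)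
Lemma rcoef_spec i j v : (branch prox i v j -> 0 < rcoef i j v) /\
                         (~~ branch prox i v j -> rcoef i j v = 0).
Proof.
have Vii := Vmx_diag_gt0 i.
case: (eqVneq j i) => [->|nji].
  have nb : ~~ branch prox i v i by apply/negP => /branch_neq; rewrite eqxx.
  split; first by rewrite (negbTE nb).
  by move=> _; rewrite /rcoef /rho divff ?mul1r ?subrr // gt_eqF.
case: (eqVneq v i) => [->|nvi].
  split; first by rewrite /branch eqxx.
  by move=> _; rewrite /rcoef /rho mulfVK ?subrr // gt_eqF.
pose h := row j V - (V j i / V i i) *: row i V.
have He a b : avoid i a b = [&& adj prox a b, ~~ pred1 i a & ~~ pred1 i b].
  by rewrite /avoid /= -andbA.
have Hh0 x : pred1 i x -> h 0 x = 0.
  by move=> /= /eqP ->; rewrite !mxE mulfVK ?subrr // gt_eqF.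
have HhA x : ~~ pred1 i x -> (h *m A) 0 x = (x == j)%:R.
  move=> /= nxi; rewrite mulmxBl -scalemxAl -!row_mul Vmx_mulA !mxE eq_sym.
  by rewrite [i == x]eq_sym (negbTE nxi) mulr0 subr0.
have hv : h 0 v = rcoef i j v by rewrite !mxE.
have eb : branch prox i v j = connect (avoid i) j v.
  by rewrite /branch nvi /= avoid_connect_sym.
rewrite eb -hv; split; first exact: (green_pos He nji Hh0 HhA).
exact: (green_vanish He nji Hh0 HhA).
Qed.

Lemma rcoef_ge0 i j v : 0 <= rcoef i j v.
Proof.
have [h1 h2] := rcoef_spec i j v; case: (boolP (branch prox i v j)) => c.
  exact/ltW/h1.
by rewrite h2.
Qed.

Section Modification.
Variables (mu : 'I_N) (f : 'rV[rat]_N).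
Hypothesis Hf : antinef prox f.
Local Notation fh := (fhat prox f).

Definition defect (v : 'I_N) : rat :=
  \sum_(i | adj prox i mu) \sum_(j | branch prox mu i j) fh 0 j * rcoef i j v.

Lemma modE_coef v : modE prox mu f 0 v = f 0 v - defect v.
Proof.
rewrite /modE /modhat mulmxBl fhatK mulmx_suml mxE; congr (_ + _).
rewrite mxE summxE; congr (- _); apply: eq_bigr => i _.
rewrite mulmx_suml summxE; apply: eq_bigr => j _.
by rewrite -scalemxAl mxE rhat_coef.
Qed.

Lemma defect_term_ge0 i j v : 0 <= fh 0 j * rcoef i j v.
Proof. by apply: mulr_ge0; [exact: Hf | exact: rcoef_ge0]. Qed.

Lemma defect_ge0 v : 0 <= defect v.
Proof. by do 2!(apply: sumr_ge0 => ? _); apply: defect_term_ge0. Qed.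

(* The defect vanishes exactly under the condition of the theorem: a term
   fh_j rcoef_[i,j](v) can only be nonzero when v lies beyond the neighbour i
   of mu and j lies in the branch at i of v. *)
Lemma defect_eq0 v : defect v = 0 <->
  ((mu == v) || adj prox mu v) \/
  (forall i, adj prox i mu -> branch prox mu i v -> forall j, branch prox i v j -> fh 0 j = 0).
Proof.
split=> [D0|H].
  case: (boolP ((mu == v) || adj prox mu v)) => near; [by left | right].
  move=> i hi hv j hj; have hij := branch_nested hi hv hj.
  have inner0 i' : adj prox i' mu -> 0 <= \sum_(j | branch prox mu i' j) fh 0 j * rcoef i' j v.
    by move=> _; apply: sumr_ge0 => k _; apply: defect_term_ge0.
  have /eqP := psumr_eq0P (fun j _ => defect_term_ge0 i j v) (psumr_eq0P inner0 D0 hi) hij.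
  by rewrite mulf_eq0 (gt_eqF ((rcoef_spec i j v).1 hj)) orbF => /eqP.
apply: big1 => i hi; apply: big1 => j hij.
case: (boolP (branch prox i v j)) => hb; last by rewrite (rcoef_spec i j v).2 // mulr0.
have [hv vmu nadj] := branch_far hi hij hb.
case: H => [/orP[/eqP mv|amv]|H]; first by rewrite mv eqxx in vmu.
  by rewrite amv in nadj.
by rewrite (H i hi hv j hb) mul0r.
Qed.

(* Beyond the neighbour i of mu only the branch at i contributes to the defect,
   since the branches of mu at its neighbours are disjoint. *)
Lemma defect_single i v : adj prox i mu -> branch prox mu i v ->
  defect v = \sum_(j | branch prox mu i j) fh 0 j * rcoef i j v.
Proof.
move=> hi hv; rewrite /defect (bigD1 i) //= [X in _ + X]big1 ?addr0 // => i' /andP[hi' ni].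
apply: big1 => j hj; case: (boolP (branch prox i' v j)) => hb.
  have [hv' _ _] := branch_far hi' hj hb.
  by rewrite (branch_disjoint hi' hi hv' hv) eqxx in ni.
by rewrite (rcoef_spec i' j v).2 // mulr0.
Qed.

(* The modification replaces Ehat_x, for x in the branch at i of mu, by its
   multiple rho Ehat_i; seen from v beyond i this gives a nonnegative sum. *)
Lemma modE_coef_branch i v : adj prox i mu -> branch prox mu i v ->
  f 0 v - defect v = \sum_(x | ~~ branch prox mu i x) fh 0 x * V x v +
                     \sum_(x | branch prox mu i x) fh 0 x * (V x i / V i i * V i v).
Proof.
move=> hi hv; rewrite (defect_single hi hv) -{1}(fhatK f) mxE (bigID (branch prox mu i)) /=.
rewrite addrC -addrA -sumrB; congr (_ + _); apply: eq_bigr => x _.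
by rewrite /rcoef /rho; ring.
Qed.

Lemma defect_cases v : defect v = 0 \/ 0 < f 0 v - defect v.
Proof.
case: (eqVneq (defect v) 0) => [|D0]; [by left | right].
have inner0 i : adj prox i mu -> 0 <= \sum_(j | branch prox mu i j) fh 0 j * rcoef i j v.
  by move=> _; apply: sumr_ge0 => k _; apply: defect_term_ge0.
have [i /andP[hi pos_i]] := psumr_neq0P inner0 (elimN eqP D0).
have [j /andP[hij pos_ij]] := psumr_neq0P (fun j _ => defect_term_ge0 i j v) (elimN eqP (lt0r_neq0 pos_i)).
have hb : branch prox i v j.
  by apply: contraTT pos_ij => /(rcoef_spec i j v).2 ->; rewrite mulr0 ltxx.
have [hv _ _] := branch_far hi hij hb.
have fj : 0 < fh 0 j.
  by rewrite lt_def Hf andbT; apply: contraTneq pos_ij => ->; rewrite mul0r ltxx.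
rewrite (modE_coef_branch hi hv) ltr_wpDl //.
  by apply: sumr_ge0 => x _; apply: mulr_ge0; [exact: Hf | exact: Vmx_ge0].
rewrite (bigD1 j) //= ltr_wpDr //.
  apply: sumr_ge0 => x /andP[hx _]; apply: mulr_ge0; first exact: Hf.
  by apply: mulr_ge0; [apply: divr_ge0 |]; apply: Vmx_ge0.
apply: mulr_gt0 => //; apply: mulr_gt0; last exact: Vmx_branch_gt0 hv.
by apply: divr_gt0; [rewrite Vmx_sym; exact: Vmx_branch_gt0 hij | exact: Vmx_diag_gt0].
Qed.

End Modification.
End Resolution.

Lemma div_sub_ge (a F d : rat) : 0 < a -> 0 <= d -> d = 0 \/ 0 < F - d ->
  a / F <= a / (F - d) /\ (a / (F - d) = a / F <-> d = 0).
Proof.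
move=> a0 d0 dcase; case: (eqVneq d 0) => [->|nd]; first by rewrite subr0.
have pos : 0 < F - d by case: dcase => // /eqP; rewrite (negbTE nd).
have dpos : 0 < d by rewrite lt_def nd d0.
have lt : a / F < a / (F - d) by rewrite ltr_pM2l // ltf_pV2 ?posrE; lra.
split; first exact: ltW.
by split=> [e|e]; [move: lt; rewrite e ltxx | move: dpos; rewrite e ltxx].
Qed.

Theorem mainTheorem8 (N : nat) (prox : rel 'I_N) (mu : 'I_N) (f g : 'rV[rat]_N) :
  proximity_structure prox ->
  is_divisor f -> antinef prox f -> f != 0 ->
  is_divisor g -> antinef prox g ->
  forall nu : 'I_N,
    lambda prox g f nu <= lambda prox g (modE prox mu f) nu /\
    (lambda prox g (modE prox mu f) nu = lambda prox g f nu <->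
       ((mu == nu) || adj prox mu nu) \/
       (forall i, adj prox i mu -> branch prox mu i nu ->
          forall j, branch prox i nu j -> fhat prox f 0 j = 0)).
Proof.
move=> Hps _ Hf _ _ Hg nu; rewrite /lambda (modE_coef Hps).
have num : 0 < g 0 nu + Kcoef prox 0 nu + 1.
  by have := antinef_ge0 Hps nu Hg; have := Kcoef_ge0 Hps nu; lra.
have [le eq] := div_sub_ge num (defect_ge0 Hps mu Hf nu) (defect_cases Hps mu Hf nu).
by split=> //; rewrite eq; apply: defect_eq0.
Qed.
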